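(* Let $\Gamma$ be an abelian group and $A$ a unital $\Gamma$-graded ring. The following are equivalent: (1) $A$ is a graded right Rickart ring; (2) every graded principal right ideal of $A$ (i.e. every right ideal $xA$ with $x$ homogeneous) is a projective right $A$-module; (3) every graded principal right ideal of $A$ is a graded projective right $A$-module. Consequently, if a $\Gamma$-graded ring $A$ is right Rickart (as an ungraded ring), then it is graded right Rickart.
   Context: A $\Gamma$-graded ring is $A=\bigoplus_{\gamma\in\Gamma}A_\gamma$ with additive subgroups $A_\gamma$ and $A_\gamma A_\delta\subseteq A_{\gamma+\delta}$; elements of $\bigcup_\gamma A_\gamma$ are homogeneous. For $X\subseteq A$, $\operatorname{ann}_r(X)=\{a\in A: xa=0 \ \forall x\in X\}$. A ring is right Rickart if $\operatorname{ann}_r(x)$ is generated as a right ideal by an idempotent for every $x\in A$. A $\Gamma$-graded ring $A$ is graded right Rickart if for every homogeneous $x$, $\operatorname{ann}_r(x)$ is generated as a right ideal by a homogeneous idempotent. A graded right module is $M=\bigoplus_\gamma M_\gamma$ with $M_\gamma A_\delta\subseteq M_{\gamma+\delta}$; a graded projective module is one graded isomorphic to a direct summand of a graded free module (a free module with a homogeneous basis, equivalently a direct sum of shifts $A(\gamma)$, where $M(\delta)_\gamma=M_{\delta+\gamma}$). *)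

From HB Require Import structures.
From mathcomp Require Import all_boot all_order all_algebra.
From Stdlib Require Lists.List.
Set Implicit Arguments. Unset Strict Implicit. Unset Printing Implicit Defensive.
Import GRing.Theory.
Local Open Scope ring_scope.

Section Graded.
Variables (G : zmodType) (A : pzRingType).

Definition is_grading (Ad : G -> A -> Prop) : Prop :=
  (forall g, Ad g 0) /\
  (forall g a b, Ad g a -> Ad g b -> Ad g (a - b)) /\
  (forall g h a b, Ad g a -> Ad h b -> Ad (g + h) (a * b)) /\
  (forall a : A, exists (s : seq G) (f : G -> A),
      uniq s /\ (forall g, Ad g (f g)) /\ a = \sum_(g <- s) f g) /\
  (forall (s : seq G) (f : G -> A), uniq s ->
      (forall g, g \in s -> Ad g (f g)) -> \sum_(g <- s) f g = 0 ->
      forall g, g \in s -> f g = 0).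

Definition homogeneous (Ad : G -> A -> Prop) (x : A) : Prop := exists g, Ad g x.

End Graded.

Section Rings.
Variable A : pzRingType.

Definition ann_r_gen_by (x e : A) : Prop :=
  forall a : A, x * a = 0 <-> exists b, a = e * b.

Definition right_rickart : Prop :=
  forall x : A, exists e : A, e * e = e /\ ann_r_gen_by x e.

Definition graded_right_rickart (G : zmodType) (Ad : G -> A -> Prop) : Prop :=
  forall x : A, homogeneous Ad x ->
    exists e : A, homogeneous Ad e /\ e * e = e /\ ann_r_gen_by x e.

Definition in_xA (x y : A) : Prop := exists a, y = x * a.

(* finitely supported families: the free right A-module on I is the set of
   finitely supported c : I -> A with pointwise operations. *)
Definition finsupp (I : Type) (c : I -> A) : Prop :=
  exists s : seq I, forall k, ~ List.In k s -> c k = 0.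

(* Right A-linear maps  i : xA -> F  and  p : F -> xA,  F free on I,
   with p o i = id, i.e. xA is isomorphic to a direct summand of F. *)
Definition retract_of_free (x : A) (I : Type)
    (i : A -> I -> A) (p : (I -> A) -> A) : Prop :=
  (forall y, in_xA x y -> finsupp (i y)) /\
  (forall y z, in_xA x y -> in_xA x z -> forall k, i (y + z) k = i y k + i z k) /\
  (forall y a, in_xA x y -> forall k, i (y * a) k = i y k * a) /\
  (forall c, finsupp c -> in_xA x (p c)) /\
  (forall c d, finsupp c -> finsupp d -> p (fun k => c k + d k) = p c + p d) /\
  (forall c a, finsupp c -> p (fun k => c k * a) = p c * a) /\
  (forall y, in_xA x y -> p (i y) = y).

Definition principal_projective (x : A) : Prop :=
  exists (I : Type) (i : A -> I -> A) (p : (I -> A) -> A), retract_of_free x i p.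

(* xA (graded by (xA)_g = xA \cap A_g) is a graded projective right module:
   a graded retract of the graded free module  (+)_k A(delta k),
   whose degree-g part consists of the c with c k in A_(delta k + g). *)
Definition principal_graded_projective (G : zmodType) (Ad : G -> A -> Prop)
    (x : A) : Prop :=
  exists (I : Type) (delta : I -> G) (i : A -> I -> A) (p : (I -> A) -> A),
    retract_of_free x i p /\
    (forall g y, in_xA x y -> Ad g y -> forall k, Ad (delta k + g) (i y k)) /\
    (forall g c, finsupp c -> (forall k, Ad (delta k + g) (c k)) -> Ad g (p c)).

End Rings.

From HB Require Import structures.
From mathcomp Require Import all_boot all_order all_algebra.
From Stdlib Require Import ClassicalEpsilon FunctionalExtensionality.
Set Implicit Arguments. Unset Strict Implicit. Unset Printing Implicit Defensive.
Import GRing.Theory.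
Local Open Scope ring_scope.

(* If ann_r(x) = eA with e idempotent, then xa |-> (1 - e)a identifies xA with
   the direct summand (1 - e)A of A; when x has degree h and e has degree 0
   (as every homogeneous idempotent does) this is a graded retract of A(-h).
   Conversely, a retraction of a free module onto xA yields v with xv = x and
   ann_r(x) contained in ann_r(v).  Comparing homogeneous components, the
   degree-0 component u of v has the same two properties, so 1 - u is a
   homogeneous idempotent generating ann_r(x). *)

Section PrincipalRightIdeals.
Variable A : pzRingType.
Implicit Types x y e u v a : A.

Definition ldiv x y : A := epsilon (inhabits 0) (fun a => y = x * a).

Lemma ldivP x y : in_xA x y -> y = x * ldiv x y.
Proof. exact: epsilon_spec. Qed.

(* [xa |-> va] is then a well-defined right-linear section of [a |-> xa]. *)
Definition splitting x v := x * v = x /\ forall a, x * a = 0 -> v * a = 0.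

Lemma ann_r_gen_mul0 x e : ann_r_gen_by x e -> x * e = 0.
Proof. by move=> ann; apply/ann; exists 1; rewrite mulr1. Qed.

Lemma compl_ldiv x e a : ann_r_gen_by x e -> e * e = e ->
  (1 - e) * ldiv x (x * a) = (1 - e) * a.
Proof.
move=> ann ee.
have [b ab] : exists b, ldiv x (x * a) - a = e * b.
  by apply/ann; rewrite mulrBr -ldivP ?subrr //; exists a.
apply/eqP; rewrite -subr_eq0 -mulrBr ab.
by rewrite mulrA mulrBl mul1r ee subrr mul0r.
Qed.

Definition compl_coords x e : A -> unit -> A := fun y _ => (1 - e) * ldiv x y.

Lemma idem_retract x e : e * e = e -> ann_r_gen_by x e ->
  retract_of_free x (compl_coords x e) (fun c => x * c tt).
Proof.
move=> ee ann; rewrite /compl_coords.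
split; [|split; [|split; [|split; [|split; [|split]]]]].
- by move=> y _; exists [:: tt]; case; case; left.
- by move=> _ _ [a ->] [b ->] _; rewrite -mulrDr !compl_ldiv // mulrDr.
- by move=> _ b [a ->] _; rewrite -mulrA !compl_ldiv // mulrA.
- by move=> c _; exists (c tt).
- by move=> c d _ _; rewrite mulrDr.
- by move=> c a _; rewrite mulrA.
- move=> y xAy; rewrite mulrA mulrBr mulr1 (ann_r_gen_mul0 ann) subr0.
  exact/esym/ldivP.
Qed.

Lemma ann_r_gen_idem_projective x e : e * e = e -> ann_r_gen_by x e ->
  principal_projective x.
Proof.
by move=> ee ann; exists unit, (compl_coords x e), (fun c => x * c tt);
  exact: idem_retract.
Qed.

Lemma principal_graded_projective_projective (G : zmodType) (Ad : G -> A -> Prop) x :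
  principal_graded_projective Ad x -> principal_projective x.
Proof. by case=> I [_ [i [p [R _]]]]; exists I, i, p. Qed.

(* Writing c = sum_k delta_k c_k and p delta_k = x w_k, linearity gives
   p c = x (sum_k w_k c_k). *)
Lemma retract_of_free_factor x (I : Type) (i : A -> I -> A) p :
  retract_of_free x i p -> forall c, finsupp c ->
  exists2 v, p c = x * v & forall a, (forall k, c k * a = 0) -> v * a = 0.
Proof.
case=> _ [_ [_ [p_in [pD [pZ _]]]]] c [s]; elim: s c => [|b s IH] c c0.
  have -> : c = (fun k => (fun _ => 0) k * 0).
    by apply: functional_extensionality => k; rewrite mulr0 c0.
  by exists 0; [rewrite pZ ?mulr0 //; exists nil | move=> a _; rewrite mul0r].
pose is_b j : bool := if excluded_middle_informative (j = b) then true else false.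
have is_bP j : reflect (j = b) (is_b j).
  by rewrite /is_b; case: excluded_middle_informative => jb; constructor.
pose delta j : A := if is_b j then 1 else 0.
pose c' j := if is_b j then 0 else c j.
have c'0 k : ~ List.In k s -> c' k = 0.
  by rewrite /c'; case: is_bP => // kb nk; apply: c0 => -[bk|//]; apply: kb.
have fin_delta : finsupp delta.
  by exists [:: b] => k nk; rewrite /delta; case: is_bP => // kb; case: nk; left.
have -> : c = (fun k => c' k + (fun j => delta j * c b) k).
  apply: functional_extensionality => k; rewrite /c' /delta.
  by case: is_bP => [->|_]; rewrite ?add0r ?mul1r ?mul0r ?addr0.
have [v' pv' v'a] := IH _ c'0; have [w pw] := p_in _ fin_delta.
exists (v' + w * c b).
  rewrite pD ?pZ ?pv' ?pw -?mulrA -?mulrDr //; first by exists s.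
  by case: fin_delta => l hl; exists l => k nk; rewrite hl ?mul0r.
move=> a ca; rewrite mulrDl -mulrA v'a.
  have is_bb : is_b b by apply/is_bP.
  by have := ca b; rewrite /c' /delta is_bb add0r mul1r => ->; rewrite mulr0 add0r.
move=> k; have := ca k; rewrite /c' /delta.
by case: is_bP => _; rewrite ?mul0r ?addr0.
Qed.

Lemma projective_splitting x : principal_projective x -> exists v, splitting x v.
Proof.
case=> I [i [p R]]; have [fin [_ [iZ [_ [_ [_ pi]]]]]] := R.
have xAx : in_xA x x by exists 1; rewrite mulr1.
have xA0 : in_xA x 0 by exists 0; rewrite mulr0.
have [v pv va] := retract_of_free_factor R (fin x xAx).
exists v; split; first by rewrite -pv pi.
move=> a xa; apply: va => k.
by rewrite -iZ // xa -{1}(mulr0 (0 : A)) iZ // mulr0.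
Qed.

Lemma splitting_ann_r_gen x u : splitting x u ->
  (1 - u) * (1 - u) = 1 - u /\ ann_r_gen_by x (1 - u).
Proof.
move=> [xu ann_u].
have uu : u * u = u.
  have /ann_u : x * (u - 1) = 0 by rewrite mulrBr xu mulr1 subrr.
  by rewrite mulrBr mulr1 => /eqP; rewrite subr_eq0 => /eqP.
split; first by rewrite mulrBl mul1r mulrBr mulr1 uu subrr subr0.
move=> a; split=> [xa | [b ->]].
  by exists a; rewrite mulrBl mul1r ann_u ?subr0.
by rewrite mulrA mulrBr mulr1 xu subrr mul0r.
Qed.

End PrincipalRightIdeals.

Section GradedRing.
Variables (G : zmodType) (A : pzRingType) (Ad : G -> A -> Prop).
Hypothesis hgr : is_grading Ad.
Implicit Types x y e u v a : A.

Lemma grade0 g : Ad g 0.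
Proof. by case: hgr. Qed.

Lemma gradeB g a b : Ad g a -> Ad g b -> Ad g (a - b).
Proof. by case: hgr => _ [subB _]; exact: subB. Qed.

Lemma gradeN g a : Ad g a -> Ad g (- a).
Proof. by rewrite -sub0r; apply: gradeB; exact: grade0. Qed.

Lemma gradeM g h a b : Ad g a -> Ad h b -> Ad (g + h) (a * b).
Proof. by case: hgr => _ [_ [mulM _]]; exact: mulM. Qed.

Lemma graded_decomposition a : exists (s : seq G) (f : G -> A),
  [/\ uniq s, forall g, Ad g (f g) & a = \sum_(g <- s) f g].
Proof. by case: hgr => _ [_ [_ [/(_ a) [s [f [? [? ?]]]] _]]]; exists s, f. Qed.

Lemma graded_sum_component (t : seq G) (F : G -> A) g y : uniq t ->
  (forall m, Ad m (F m)) -> Ad g y -> \sum_(m <- t) F m = y ->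
  y = if g \in t then F g else 0.
Proof.
case: hgr => _ [_ [_ [_ direct]]] ut hF hy sumF.
case: ifP => gt.
  pose F' m := if m == g then F g - y else F m.
  suff : F' g = 0 by rewrite /F' eqxx => /eqP; rewrite subr_eq0 eq_sym => /eqP.
  apply: (direct _ _ ut _ _ _ gt) => [m _|].
    by rewrite /F'; case: eqP => [->|_] //; exact: gradeB.
  rewrite (bigD1_seq g) //= {1}/F' eqxx.
  rewrite (eq_bigr F) => [|m /negbTE]; last by rewrite /F' => ->.
  by rewrite -sumF (bigD1_seq g) //= opprD addrA subrr add0r addNr.
pose F' m := if m == g then - y else F m.
have ugt : uniq (g :: t) by rewrite /= gt.
suff : F' g = 0 by rewrite /F' eqxx => /eqP; rewrite oppr_eq0 => /eqP.
apply: (direct _ _ ugt _ _ _ (mem_head _ _)) => [m _|].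
  by rewrite /F'; case: eqP => [->|_] //; exact: gradeN.
rewrite big_cons {1}/F' eqxx (eq_big_seq F) ?sumF ?addNr // => m mt.
by rewrite /F'; case: eqP => // mg; move: gt; rewrite -mg mt.
Qed.

Lemma graded_sum_component_shift (s : seq G) (F : G -> A) d g y : uniq s ->
  (forall k, Ad (k + d) (F k)) -> Ad (g + d) y -> \sum_(k <- s) F k = y ->
  y = if g \in s then F g else 0.
Proof.
move=> us hF hy sumF.
have := graded_sum_component (t := map (+%R^~ d) s) (F := fun m => F (m - d)) _ _ hy.
rewrite (mem_map (addIr d)) addrK; apply.
- by rewrite (map_inj_uniq (addIr d)).
- by move=> m; have := hF (m - d); rewrite subrK.
- by rewrite big_map -sumF; apply: eq_bigr => k _; rewrite addrK.
Qed.

Lemma mul_homog_component_l h x a (s : seq G) f g : uniq s ->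
  (forall k, Ad k (f k)) -> a = \sum_(k <- s) f k -> Ad h x ->
  Ad (h + g) (x * a) -> x * a = if g \in s then x * f g else 0.
Proof.
move=> us hf -> hx hy.
apply: (graded_sum_component_shift (F := fun k => x * f k) (d := h)) => //.
- by move=> k; rewrite addrC; exact: gradeM.
- by rewrite addrC.
- by rewrite big_distrr.
Qed.

Lemma mul_homog_component_r h a v (s : seq G) f g : uniq s ->
  (forall k, Ad k (f k)) -> v = \sum_(k <- s) f k -> Ad h a ->
  Ad (g + h) (v * a) -> v * a = if g \in s then f g * a else 0.
Proof.
move=> us hf -> ha hy.
apply: (graded_sum_component_shift (F := fun k => f k * a) (d := h)) => //.
- by move=> k; exact: gradeM.
- by rewrite big_distrl.
Qed.

Lemma grade_one : Ad 0 1.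
Proof.
have [s [u [us hu e1]]] := graded_decomposition 1.
pose u0 := if 0 \in s then u 0 else 0.
have hu0 : Ad 0 u0 by rewrite /u0; case: ifP => _; [exact: hu | exact: grade0].
(* The degree-k component of u_k = u_k * 1 is u_k * u_0. *)
have uKu0 k : u k = u k * u0.
  have := mul_homog_component_l (g := 0) us hu e1 (hu k).
  rewrite addr0 mulr1 => /(_ (hu k)) {1}->.
  by rewrite /u0; case: ifP; rewrite ?mulr0.
suff E : 1 * u0 = 1 by rewrite -E mul1r.
rewrite {1}e1 big_distrl [RHS]e1; apply: eq_bigr => k _; exact/esym/uKu0.
Qed.

Lemma grade_eq0 g h a : Ad g a -> Ad h a -> g != h -> a = 0.
Proof.
move=> hg hh ngh; pose F m := if m == h then a else 0.
have hF m : Ad m (F m).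
  by rewrite /F; case: eqP => [->|_]; [exact: hh | exact: grade0].
have := graded_sum_component (t := [:: h]) (F := F) _ hF hg.
by rewrite big_seq1 /F eqxx inE (negbTE ngh); apply.
Qed.

Lemma homog_idem_grade0 e : homogeneous Ad e -> e * e = e -> Ad 0 e.
Proof.
case=> d he ee; have [<- //|dn0] := eqVneq d 0.
have he2 : Ad (d + d) e by rewrite -ee; exact: gradeM.
have dd : d + d != d by rewrite -[X in _ != X]addr0 (inj_eq (@addrI _ d)).
by rewrite (grade_eq0 he2 he dd); exact: grade0.
Qed.

Lemma homog_in_xA h g x y : Ad h x -> Ad (h + g) y -> in_xA x y ->
  exists2 a, Ad g a & y = x * a.
Proof.
move=> hx hy [a ya]; have [s [f [us hf ea]]] := graded_decomposition a.
have := mul_homog_component_l (g := g) us hf ea hx; rewrite -ya => /(_ hy) ->.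
by case: ifP => _; [exists (f g) | exists 0; rewrite ?mulr0 //; exact: grade0].
Qed.

Lemma graded_projective_of_idem h x e : Ad h x -> Ad 0 e -> e * e = e ->
  ann_r_gen_by x e -> principal_graded_projective Ad x.
Proof.
move=> hx he ee ann.
exists unit, (fun _ => - h), (compl_coords x e), (fun c => x * c tt).
split; first exact: idem_retract.
split=> [g y xAy hy k | g c _ hc]; last by have := gradeM hx (hc tt); rewrite addNKr.
have hy' : Ad (h + (g - h)) y by rewrite addrC subrK.
have [a ha ya] := homog_in_xA hx hy' xAy.
rewrite /compl_coords ya compl_ldiv //.
rewrite addrC -[g - h]add0r; apply: gradeM ha; exact: gradeB grade_one he.
Qed.

Lemma ann_r_sub_homog h x u : Ad h x ->
  (forall k a, Ad k a -> x * a = 0 -> u * a = 0) ->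
  forall a, x * a = 0 -> u * a = 0.
Proof.
move=> hx hu a xa; have [s [f [us hf ea]]] := graded_decomposition a.
rewrite ea big_distrr big1_seq //= => k ks; apply: (hu k) => //.
have := mul_homog_component_l (g := k) us hf ea hx.
by rewrite xa ks => /(_ (grade0 _))/esym.
Qed.

Lemma splitting_grade0 h x v : Ad h x -> splitting x v ->
  exists2 u, Ad 0 u & splitting x u.
Proof.
move=> hx [xv ann_v]; have [s [f [us hf ev]]] := graded_decomposition v.
pose u := if 0 \in s then f 0 else 0.
exists u; first by rewrite /u; case: ifP => _; [exact: hf | exact: grade0].
split.
  have := mul_homog_component_l (g := 0) us hf ev hx; rewrite xv addr0 => /(_ hx).
  by rewrite /u; case: ifP => _ {2}->; rewrite ?mulr0.
apply: (ann_r_sub_homog hx) => k a ha xa.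
have := mul_homog_component_r (g := 0) us hf ev ha.
rewrite ann_v // => /(_ (grade0 _)).
by rewrite /u; case: ifP => _ <-; rewrite ?mul0r.
Qed.

Lemma graded_rickart_of_splitting h x v : Ad h x -> splitting x v ->
  exists e, homogeneous Ad e /\ e * e = e /\ ann_r_gen_by x e.
Proof.
move=> hx /(splitting_grade0 hx) [u hu /splitting_ann_r_gen [ee ann]].
by exists (1 - u); split=> //; exists 0; exact: gradeB grade_one hu.
Qed.

End GradedRing.

Theorem mainTheorem1 (G : zmodType) (A : pzRingType) (Ad : G -> A -> Prop)
    (hgr : is_grading Ad) :
  (graded_right_rickart Ad <->
     (forall x : A, homogeneous Ad x -> principal_projective x)) /\
  (graded_right_rickart Ad <->
     (forall x : A, homogeneous Ad x -> principal_graded_projective Ad x)) /\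
  (right_rickart A -> graded_right_rickart Ad).
Proof.
have rickart_of_proj : (forall x : A, homogeneous Ad x -> principal_projective x) ->
    graded_right_rickart Ad.
  move=> proj x hxh; have [v sv] := projective_splitting (proj x hxh).
  by have [h hx] := hxh; exact: graded_rickart_of_splitting hx sv.
have gproj_of_rickart : graded_right_rickart Ad ->
    forall x : A, homogeneous Ad x -> principal_graded_projective Ad x.
  move=> grr x hxh; have [e [he [ee ann]]] := grr x hxh; have [h hx] := hxh.
  exact: graded_projective_of_idem hx (homog_idem_grade0 hgr he ee) ee ann.
split; [split|split; [split|]] => [grr x /(gproj_of_rickart grr)| | | gproj | rr].
- exact: principal_graded_projective_projective.
- exact: rickart_of_proj.
- exact: gproj_of_rickart.
- by apply: rickart_of_proj => x /gproj /principal_graded_projective_projective.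
- apply: rickart_of_proj => x _; have [e [ee ann]] := rr x.
  exact: ann_r_gen_idem_projective ee ann.
Qed.
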